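(* Let $(m,n)$ be coprime positive integers, $\gamma\in D_{m,n}$, and let $\gamma^*\in D_{m+n,n}$ be obtained by inserting one horizontal unit step immediately after each vertical step of $\gamma$. Then \[ h(\gamma)=h(\gamma^* )-\sum_{p\in V(\gamma^* )}k(p). \]
   Context: For coprime positive $(m,n)$, an $(m,n)$-Dyck path is a lattice path from $(0,0)$ to $(m,n)$ of $m$ horizontal unit steps $(1,0)$ and $n$ vertical unit steps $(0,1)$ lying weakly above the diagonal $y=(n/m)x$; $D_{m,n}$ is the set of them. For a path in $D_{m,n}$ (resp. $D_{m+n,n}$), a parallel line is a line parallel to its diagonal $y=(n/m)x$ (resp. $y=(n/(m+n))x$), and $l(p)$ is the parallel line through $p$. $O(\gamma)$ is the set of pairs $(r_h,r_v)$ with $r_h$ a horizontal step and $r_v$ a vertical step of $\gamma$, $r_v$ appearing after $r_h$; $H(\gamma)$ is the set of pairs in $O(\gamma)$ for which some parallel line intersects both steps; $h(\gamma)=|H(\gamma)|$. An outer vertex is a lattice point of the path immediately after a vertical step and immediately before a horizontal step; for an outer vertex $p$, $k(p)$ is the number of horizontal steps of the path intersecting $l(p)$, not counting the two steps meeting at $p$. $p_0$ is the outer vertex farthest from the diagonal and $V(\cdot)$ is the set of outer vertices other than $p_0$. *)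

From mathcomp Require Import all_boot all_order all_algebra.
Set Implicit Arguments. Unset Strict Implicit. Unset Printing Implicit Defensive.
Import GRing.Theory Num.Theory.

(* A lattice path is a sequence of steps: [true] = vertical unit step (0,1),
   [false] = horizontal unit step (1,0).  Step number i (0-based) starts at the
   lattice point reached after the first i steps. *)

Definition px (g : seq bool) (i : nat) : nat := count negb (take i g).
Definition py (g : seq bool) (i : nat) : nat := count id (take i g).

(* For the diagonal y = (n/m) x, the parallel line through (x,y) is the level
   set of  L(x,y) = m*y - n*x.  [lev m n g i] is the level of the point
   reached after i steps. *)
Definition lev (m n : nat) (g : seq bool) (i : nat) : int :=
  ((m * py g i)%:Z - (n * px g i)%:Z)%R.

Definition is_dyck (m n : nat) (g : seq bool) : bool :=
  [&& count id g == n, count negb g == m &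
      all (fun i => n * px g i <= m * py g i) (iota 0 (size g).+1)].

(* (i,j) in H(g): step i horizontal, step j vertical, j after i, and some
   parallel line meets both steps.  The horizontal step i covers the levels
   [lev i - n, lev i], the vertical step j covers [lev j, lev j + m]. *)
Definition in_H (m n : nat) (g : seq bool) (i j : nat) : bool :=
  [&& i < j, j < size g, ~~ nth true g i, nth false g j,
      (lev m n g i - n%:Z <= lev m n g j + m%:Z)%R &
      (lev m n g j <= lev m n g i)%R].

Definition hstat (m n : nat) (g : seq bool) : nat :=
  #|[set p : 'I_(size g) * 'I_(size g) | in_H m n g p.1 p.2]|.

Definition star (g : seq bool) : seq bool :=
  flatten [seq (if b then [:: true; false] else [:: false]) | b <- g].

Definition outer (g : seq bool) (i : nat) : bool :=
  [&& 0 < i, i < size g, nth false g i.-1 & ~~ nth true g i].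

(* k(p) for p the point after i steps: number of horizontal steps of g meeting
   the parallel line l(p), excluding the two steps (i-1 and i) meeting at p. *)
Definition kval (m n : nat) (g : seq bool) (i : nat) : nat :=
  #|[set j : 'I_(size g) | [&& ~~ nth true g j, (j : nat) != i, (j : nat) != i.-1,
       (lev m n g j - n%:Z <= lev m n g i)%R & (lev m n g i <= lev m n g j)%R]]|.

(* V(g): outer vertices other than the outer vertex p0 farthest from the
   diagonal (distance to the diagonal is proportional to the level). *)
Definition Vset (m n : nat) (g : seq bool) : {set 'I_(size g).+1} :=
  [set i : 'I_(size g).+1 | outer g i &&
     [exists i' : 'I_(size g).+1, outer g i' && (lev m n g i < lev m n g i')%R]].

(* Tag every step of a path with its direction and the level of its starting
   point.  With the slope parameters (m + n, n) of [star gamma], a vertical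
   step of gamma at level L becomes a vertical step at level L followed by a
   horizontal step at level L + m + n, and the points of gamma keep their
   levels.  Hence h(gamma), h(star gamma) and the sum of k over all outer
   vertices of [star gamma] (the top one p0 has k(p0) = 0) are sums over pairs
   of steps of gamma.  Comparing them pair by pair, everything cancels except,
   for each vertical step i of gamma, the signed number of later steps crossing
   the level L_i + m + n; this telescopes to 0 because, m and n being coprime,
   no later point of gamma lies on that level. *)

From mathcomp Require Import all_boot all_order all_algebra zify ring.
Import GRing.Theory Num.Theory.
Set Implicit Arguments. Unset Strict Implicit. Unset Printing Implicit Defensive.
Local Open Scope ring_scope.

Definition ind (b : bool) : int := if b then 1 else 0.

Ltac ind_lia := rewrite /ind; repeat case: ifP; lia.

Section PairSums.
Variables (T : Type) (V : zmodType).
Implicit Types (F G : T -> T -> V) (s : seq T).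

Fixpoint pairsum F s : V :=
  if s is x :: s' then \sum_(y <- s') F x y + pairsum F s' else 0.

Lemma pairsum_cat F s1 s2 : pairsum F (s1 ++ s2) =
  pairsum F s1 + \sum_(x <- s1) \sum_(y <- s2) F x y + pairsum F s2.
Proof.
elim: s1 => [|x s1 IH] /=; first by rewrite big_nil !add0r.
by rewrite IH big_cat big_cons /= !addrA -!(addrAC _ (pairsum F s1)) addrAC.
Qed.

Lemma pairsum_flatten F (f : T -> seq T) s :
  pairsum F (flatten (map f s)) = \sum_(x <- s) pairsum F (f x) +
     pairsum (fun x y => \sum_(u <- f x) \sum_(v <- f y) F u v) s.
Proof.
elim: s => [|x s IH] /=; first by rewrite big_nil add0r.
rewrite pairsum_cat IH big_cons exchange_big big_flatten /= big_map.
under [X in _ + X + _]eq_bigr do rewrite exchange_big.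
by rewrite -!addrA; congr (_ + _); rewrite addrCA.
Qed.

Lemma pairsumD F G s :
  pairsum (fun x y => F x y + G x y) s = pairsum F s + pairsum G s.
Proof. by elim: s => [|x s IH] /=; rewrite ?addr0 // IH big_split addrACA. Qed.

Lemma pairsumB F G s :
  pairsum (fun x y => F x y - G x y) s = pairsum F s - pairsum G s.
Proof. by elim: s => [|x s IH] /=; rewrite ?subr0 // IH sumrB opprD addrACA. Qed.

Lemma sum2_pairsum F s : \sum_(x <- s) \sum_(y <- s) F x y =
  pairsum F s + pairsum (fun x y => F y x) s + \sum_(x <- s) F x x.
Proof.
elim: s => [|x s IH] /=; first by rewrite !big_nil !add0r.
rewrite !big_cons /=; under [X in _ + X]eq_bigr do rewrite big_cons.
by rewrite big_split /= IH [LHS](AC (2*(1*3)) ((2*4)*(3*5)*(1*6))).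
Qed.

Lemma pairsum_nth F s x0 : pairsum F s =
  \sum_(0 <= i < size s) \sum_(i.+1 <= j < size s) F (nth x0 s i) (nth x0 s j).
Proof.
elim: s => [|x s IH]; first by rewrite big_geq.
rewrite [LHS]/= big_nat_recl // IH big_add1 (big_nth x0); congr (_ + _).
by apply: eq_bigr => i _; rewrite [RHS]big_add1.
Qed.

End PairSums.

Definition lev_step (a b : nat) (x : bool) : int := if x then a%:Z else - b%:Z.

Lemma lev0 a b g : lev a b g 0 = 0.
Proof. by rewrite /lev /px /py take0 /= !muln0. Qed.

Lemma levS a b g t : (t < size g)%N ->
  lev a b g t.+1 = lev a b g t + lev_step a b (nth false g t).
Proof.
move=> ht; rewrite /lev /px /py (take_nth false ht) -!cats1 !count_cat /=.
case: (nth false g t) => /=; rewrite /lev_step !mulnDr !muln0 !muln1 !addn0; lia.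
Qed.

Lemma lev_cons a b x g t : lev a b (x :: g) t.+1 = lev_step a b x + lev a b g t.
Proof.
rewrite /lev /px /py /= /lev_step; case: x => /=; rewrite !mulnDr !muln0 !muln1; lia.
Qed.

Definition steps (a b : nat) (g : seq bool) : seq (bool * int) :=
  [seq (nth false g t, lev a b g t) | t <- iota 0 (size g)].

Definition shift_lev (d : int) (v : bool * int) : bool * int := (v.1, v.2 + d).

Lemma size_steps a b g : size (steps a b g) = size g.
Proof. by rewrite size_map size_iota. Qed.

Lemma nth_steps a b g t : (t < size g)%N ->
  nth (false, 0) (steps a b g) t = (nth false g t, lev a b g t).
Proof. by move=> ht; rewrite (nth_map 0%N) ?size_iota // nth_iota. Qed.

Lemma big_steps a b g (F : bool * int -> int) :
  \sum_(v <- steps a b g) F v = \sum_(j < size g) F (nth false g j, lev a b g j).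
Proof.
rewrite (big_nth (false, 0)) size_steps big_mkord.
by apply: eq_bigr => -[j hj] _; rewrite nth_steps.
Qed.

Lemma mem_steps a b g v : v \in steps a b g ->
  exists2 k, (k < size g)%N & v = (nth false g k, lev a b g k).
Proof.
case/(nthP (false, 0)) => k; rewrite size_steps => hk <-.
by exists k; rewrite ?nth_steps.
Qed.

Lemma steps_cons a b x g :
  steps a b (x :: g) = (x, 0) :: map (shift_lev (lev_step a b x)) (steps a b g).
Proof.
rewrite /steps /= lev0 -[1%N]addn0 iotaDl -!map_comp; congr (_ :: _).
by apply: eq_map => t /=; rewrite /shift_lev lev_cons addrC.
Qed.

(* The steps of [star g] replacing a step [v] of [g], for [M = m + n]: measured
   with the slope parameters (m + n, n) of [star g], the points of [g] keep
   their levels (lemma [steps_star]). *)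
Definition star_block (M : int) (v : bool * int) : seq (bool * int) :=
  if v.1 then [:: (true, v.2); (false, v.2 + M)] else [:: v].

Lemma star_block_shift M d v :
  star_block M (shift_lev d v) = map (shift_lev d) (star_block M v).
Proof. by case: v => -[] L; rewrite /star_block /shift_lev //= addrAC. Qed.

Lemma star_true g : star (true :: g) = [:: true, false & star g].
Proof. by []. Qed.

Lemma star_false g : star (false :: g) = false :: star g.
Proof. by []. Qed.

Lemma steps_star m n g :
  steps (m + n) n (star g) = flatten (map (star_block (m + n)%:Z) (steps m n g)).
Proof.
have flatten_shift d s : flatten (map (star_block (m + n)%:Z) (map (shift_lev d) s)) =
    map (shift_lev d) (flatten (map (star_block (m + n)%:Z) s)).
  rewrite map_flatten -!map_comp; congr flatten.
  by apply: eq_map => v; rewrite /= star_block_shift.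
elim: g => [|[] g IH] //; last by rewrite star_false !steps_cons IH /= flatten_shift.
rewrite star_true !steps_cons IH /= flatten_shift -map_comp.
congr [:: _, _ & _]; apply: eq_map => v.
by rewrite /shift_lev /=; congr (_, _); lia.
Qed.

Lemma pxDpy g i : (i <= size g)%N -> (px g i + py g i)%N = i.
Proof.
move=> hi; rewrite addnC /px /py -[count negb _]/(count (predC id) _).
by rewrite count_predC size_take_min; apply/minn_idPl.
Qed.

Lemma pyS g t : (t < size g)%N -> py g t.+1 = (py g t + nth false g t)%N.
Proof.
move=> ht; rewrite /py (take_nth false ht) -cats1 count_cat /=.
by case: (nth false g t).
Qed.

Lemma coprime_diag a b x y : (0 < a)%N -> (0 < b)%N -> coprime a b -> (y <= b)%N ->
  (a * y = b * x)%N -> (x = 0 /\ y = 0)%N \/ (x = a /\ y = b).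
Proof.
move=> a_gt0 b_gt0 cop_ab yb e.
have : (a %| x)%N by rewrite -(Gauss_dvdr _ cop_ab) -e dvdn_mulr.
case: (posnP x) => [x0 _|x_gt0 /(dvdn_leq x_gt0) ax]; [left | right]; nia.
Qed.

Section LatticePath.
Variables (m n : nat) (g : seq bool).
Local Notation N := (size g).
Local Notation L := (lev m n g).
Local Notation b := (nth false g).

Lemma lev_bound_vertical j : (j <= N)%N ->
  L j <= 0 \/ exists2 k, (k < j)%N & b k /\ L j <= L k + m%:Z.
Proof.
elim: j => [|j IH] hj; first by left; rewrite lev0.
rewrite levS //; case bj: (b j); rewrite /lev_step.
  by right; exists j => //; split => //; lia.
case: (IH (ltnW hj)) => [|[k hk [bk h]]]; first by left; lia.
by right; exists k; [exact: ltnW | split => //; lia].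
Qed.

Definition signed_cross (t : int) (j : nat) : int :=
  if b j then ind ((L j < t) && (t < L j + m%:Z))
  else - ind ((L j - n%:Z < t) && (t < L j)).

Lemma sum_signed_cross t a c : (a <= c <= N)%N ->
  (forall j, (a <= j <= c)%N -> L j != t) ->
  \sum_(a <= j < c) signed_cross t j = ind (t < L c) - ind (t < L a).
Proof.
elim: c => [|c IH] /andP[ac cN] avoid.
  by move: ac; rewrite leqn0 => /eqP->; rewrite big_geq // subrr.
case: (ltnP c a) => [ca|{}ac].
  have -> : a = c.+1 by lia.
  by rewrite big_geq // subrr.
rewrite big_nat_recr //= IH ?ac ?(ltnW cN) //; last first.
  by move=> j /andP[aj jc]; apply: avoid; rewrite aj leqW.
have /eqP avoid_c : L c != t by apply: avoid; rewrite ac leqW.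
have /eqP avoid_c1 : L c.+1 != t by apply: avoid; rewrite leqnn andbT leqW.
move: avoid_c1; rewrite levS // /signed_cross /lev_step.
by case: (b c) => avoid_c1; ind_lia.
Qed.

End LatticePath.

Section DyckPath.
Variables (m n : nat) (g : seq bool).
Hypotheses (m_gt0 : (0 < m)%N) (n_gt0 : (0 < n)%N) (cop_mn : coprime m n)
  (dyck_g : is_dyck m n g).
Local Notation N := (size g).
Local Notation L := (lev m n g).
Local Notation b := (nth false g).

Lemma px_size : px g N = m.
Proof. by case/and3P: dyck_g => _ /eqP; rewrite /px take_size. Qed.

Lemma py_size : py g N = n.
Proof. by case/and3P: dyck_g => /eqP; rewrite /py take_size. Qed.

Lemma size_dyck : N = (m + n)%N.
Proof. by rewrite -{1}(pxDpy (leqnn N)) px_size py_size. Qed.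

Lemma lev_size : L N = 0.
Proof. by rewrite /lev px_size py_size mulnC subrr. Qed.

Lemma lev_ge0 i : (i <= N)%N -> 0 <= L i.
Proof.
move=> hi; case/and3P: dyck_g => _ _ /allP /(_ i).
by rewrite mem_iota add0n ltnS hi => /(_ isT); rewrite /lev subr_ge0 lez_nat.
Qed.

Lemma lev_displacement i j : (i <= j <= N)%N -> exists dx dy,
  [/\ L j = L i + (m * dy)%:Z - (n * dx)%:Z, (dx + dy = j - i)%N,
      (px g i + dx <= m)%N & (py g i + dy <= n)%N].
Proof.
case/andP=> hij hj; set s := take (j - i) (drop i g).
have split_count p : count p (take j g) = (count p (take i g) + count p s)%N.
  by rewrite -{1}(subnKC hij) takeD count_cat.
have prefix_le p : (count p (take j g) <= count p g)%N.
  by rewrite -{2}(cat_take_drop j g) count_cat leq_addr.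
exists (count negb s), (count id s); split.
- by rewrite /lev /px /py !split_count !mulnDr !PoszD; ring.
- rewrite -[count negb s]/(count (predC id) s) addnC count_predC size_take_min.
  by rewrite size_drop; apply/minn_idPl; rewrite leq_sub2r.
- by rewrite -px_size /px take_size -split_count prefix_le.
- by rewrite -py_size /py take_size -split_count prefix_le.
Qed.

Lemma lev_inj i j : (i < N)%N -> (j < N)%N -> L i = L j -> i = j.
Proof.
wlog hij : i j / (i <= j)%N => [wlog_ij hi hj e|hi hj e].
  by case/orP: (leq_total i j) => ?; [|apply/esym]; apply: wlog_ij.
have /lev_displacement [dx [dy [eL hd hx hy]]] : (i <= j <= N)%N by rewrite hij ltnW.
have {}e : (m * dy = n * dx)%N by move: eL; rewrite e; lia.
have := coprime_diag m_gt0 n_gt0 cop_mn (leq_trans (leq_addl _ _) hy) e.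
by rewrite size_dyck in hj; lia.
Qed.

Lemma lev_after_vertical i j : (i < N)%N -> b i -> (i < j <= N)%N ->
  L j != L i + m%:Z + n%:Z.
Proof.
move=> hi bi /andP[hij hj]; apply/eqP => e.
have /lev_displacement [dx [dy [eL hd hx hy]]] : (i.+1 <= j <= N)%N.
  by rewrite hij hj.
have {}e : (m * dy = n * dx.+1)%N.
  by move: eL; rewrite e levS // bi /lev_step mulnS; lia.
have := coprime_diag m_gt0 n_gt0 cop_mn (leq_trans (leq_addl _ _) hy) e.
by rewrite pyS // bi in hy; lia.
Qed.

Lemma lev_before_vertical i j : (i < j)%N -> (j < N)%N -> b j ->
  L i != L j + m%:Z + n%:Z.
Proof.
move=> hij hj bj; apply/eqP => e.
have /lev_displacement [dx [dy [eL hd hx hy]]] : (i <= j.+1 <= N)%N.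
  by rewrite (leqW (ltnW hij)) hj.
have {e eL}e : (m * dy + n = n * dx)%N.
  by move: eL; rewrite e levS // bj /lev_step; lia.
case: dx e hd hx => [|dx]; rewrite ?muln0 ?mulnS; first lia.
rewrite addnC => /addnI e hd hx.
have := coprime_diag m_gt0 n_gt0 cop_mn (leq_trans (leq_addl _ _) hy) e.
lia.
Qed.

End DyckPath.

Lemma card_ind (T : finType) (P : pred T) : (#|[set x | P x]|)%:Z = \sum_x ind (P x).
Proof.
rewrite -sum1dep_card -natz natr_sum big_mkcond /=.
by apply: eq_bigr => x _; rewrite /ind; case: (P x).
Qed.

Definition hmeet (a b : nat) (x y : bool * int) : bool :=
  [&& ~~ x.1, y.1, x.2 - b%:Z <= y.2 + a%:Z & y.2 <= x.2].

Lemma hstat_pairsum a b g :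
  (hstat a b g)%:Z = pairsum (fun x y => ind (hmeet a b x y)) (steps a b g).
Proof.
rewrite /hstat card_ind /=.
rewrite -(pair_bigA _ (fun i j : 'I_(size g) => ind (in_H a b g i j))) /=.
rewrite (pairsum_nth _ _ (false, 0)) size_steps big_mkord.
apply: eq_bigr => -[i hi] _ /=.
rewrite -(big_mkord xpredT (fun j => ind (in_H a b g i j))).
rewrite (big_cat_nat _ (n := i.+1)) //=.
rewrite big1_seq ?add0r => [|j]; last first.
  by rewrite mem_index_iota => /andP[_ /andP[_]]; rewrite ltnS /in_H ltnNge => ->.
apply: eq_big_nat => j /andP[hij hj].
by rewrite !nth_steps // /in_H /hmeet hij hj (set_nth_default false true hi).
Qed.

Lemma star_vertical_next g j : (j < size (star g))%N -> nth false (star g) j ->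
  (j.+1 < size (star g))%N && ~~ nth true (star g) j.+1.
Proof.
elim: g j => [|[] g IH] j //; rewrite ?star_true ?star_false.
  by case: j => [|[|j]] //= hj hb; apply: IH.
by case: j => [|j] //= hj hb; apply: IH.
Qed.

Lemma outer_star g j : (j < size (star g))%N ->
  outer (star g) j.+1 = nth false (star g) j.
Proof.
move=> hj; rewrite /outer /=; case e: (nth false (star g) j); last by rewrite andbF.
by have /andP[-> ->] := star_vertical_next hj e.
Qed.

Lemma vertical_steps_star m n g t :
  ((true, t) \in steps (m + n) n (star g)) = ((true, t) \in steps m n g).
Proof.
rewrite steps_star; apply/flattenP/idP => [[s /mapP [[[] L] hL ->]]|hL].
- by rewrite !inE => /orP[/eqP[->]|/eqP].
- by rewrite inE => /eqP[].
- by exists (star_block (m + n)%:Z (true, t)); [apply: map_f | rewrite mem_head].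
Qed.

Definition hcross (b : nat) (t : int) (v : bool * int) : bool :=
  ~~ v.1 && (v.2 - b%:Z <= t <= v.2).

Section Star.
Variables (m n : nat) (g : seq bool).
Local Notation M := (m + n)%N%:Z.
Local Notation S := (star g).
Local Notation LS := (lev (m + n) n S).

Definition block_cross (t : int) (y : bool * int) : int :=
  \sum_(v <- star_block M y) ind (hcross n t v).

(* For a vertical step [x], the horizontal steps of the block of [y] meeting the
   level of the outer vertex right after [x]; summed over all [y], this is k of
   that vertex plus one, for the step leaving it. *)
Definition outer_cross (x y : bool * int) : int := ind x.1 * block_cross (x.2 + M) y.

Lemma kval_star j : (j < size S)%N -> nth false S j ->
  (kval (m + n) n S j.+1)%:Z =
  \sum_(v <- steps (m + n) n S) ind (hcross n (LS j + M) v) - 1.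
Proof.
move=> hj bj; have /andP[hj1 bj1] := star_vertical_next hj bj.
have lev1 : LS j.+1 = LS j + M by rewrite levS // bj.
rewrite /kval card_ind big_steps (bigD1 (Ordinal hj1)) //=.
rewrite [in RHS](bigD1 (Ordinal hj1)) //=.
have -> : ind (hcross n (LS j + M) (nth false S j.+1, LS j.+1)) = 1.
  rewrite /hcross /= (set_nth_default true false hj1) bj1 lev1 /ind /=.
  by case: ifP => //; lia.
rewrite eqxx andbF add0r [RHS]addrC addKr.
apply: eq_bigr => -[j' hj'] /=; rewrite -val_eqE /= => hne.
rewrite hne /hcross /= lev1 (set_nth_default false true hj').
by case: (eqVneq j' j) => [->|]; rewrite ?bj.
Qed.

Lemma sum_hcross_star t : \sum_(u <- steps (m + n) n S) ind (hcross n t u) =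
  \sum_(y <- steps m n g) block_cross t y.
Proof. by rewrite steps_star big_flatten /= big_map. Qed.

Lemma outer_cross_diag x : outer_cross x x = ind x.1.
Proof.
case: x => -[] L; rewrite /outer_cross /block_cross /star_block /= !big_cons big_nil.
  by rewrite /hcross /ind /=; case: ifP; lia.
by rewrite mul0r.
Qed.

Lemma sum_outer_kval :
  \sum_(i < (size S).+1 | outer S i) (kval (m + n) n S i)%:Z =
  pairsum outer_cross (steps m n g) +
  pairsum (fun x y => outer_cross y x) (steps m n g).
Proof.
have -> : \sum_(i < (size S).+1 | outer S i) (kval (m + n) n S i)%:Z =
    \sum_(v <- steps (m + n) n S)
      ind v.1 * (\sum_(y <- steps m n g) block_cross (v.2 + M) y - 1).
  rewrite big_mkcond big_ord_recl /= add0r big_steps.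
  apply: eq_bigr => -[j hj] _; rewrite /bump /= add1n outer_star //.
  by case bj: (nth false S j); rewrite /ind ?mul1r ?mul0r ?kval_star ?sum_hcross_star.
rewrite steps_star big_flatten /= big_map.
have per_block x : \sum_(v <- star_block M x)
      ind v.1 * (\sum_(y <- steps m n g) block_cross (v.2 + M) y - 1) =
    \sum_(y <- steps m n g) outer_cross x y - ind x.1.
  case: x => -[] L; rewrite /star_block /outer_cross !big_cons big_nil /ind /=.
    rewrite mul1r mul0r !addr0.
    by congr (_ - _); apply: eq_bigr => y _; rewrite mul1r.
  by rewrite mul0r subr0 big1 // => y _; rewrite mul0r.
under eq_bigr do rewrite per_block.
by rewrite sumrB sum2_pairsum (eq_bigr _ (fun x _ => outer_cross_diag x)) addrK.
Qed.

Definition star_meet (x y : bool * int) : int :=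
  \sum_(u <- star_block M x) \sum_(v <- star_block M y) ind (hmeet (m + n) n u v).

Lemma hstat_star : (hstat (m + n) n S)%:Z = pairsum star_meet (steps m n g).
Proof.
rewrite hstat_pairsum steps_star pairsum_flatten big1 ?add0r // => -[[] L] _;
  by rewrite /= ?big_cons !big_nil.
Qed.

End Star.

Section StarOfDyck.
Variables (m n : nat) (g : seq bool).
Hypotheses (m_gt0 : (0 < m)%N) (n_gt0 : (0 < n)%N) (cop_mn : coprime m n)
  (dyck_g : is_dyck m n g).
Local Notation N := (size g).
Local Notation L := (lev m n g).
Local Notation b := (nth false g).
Local Notation M := (m + n)%N%:Z.
Local Notation S := (star g).
Local Notation LS := (lev (m + n) n S).

Lemma block_cross_top k k' : (k < N)%N -> b k ->
  (forall i, (i < N)%N -> b i -> L i <= L k) -> (k' < N)%N ->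
  block_cross m n (L k + M) (b k', L k') = ind (k' == k).
Proof.
move=> hk bk top hk'; rewrite /block_cross /star_block /=.
case bk': (b k'); rewrite !big_cons ?big_nil /hcross /=.
  have := top k' hk' bk'; case: (eqVneq k' k) => [-> _|ne le]; first ind_lia.
  have /eqP : L k' != L k.
    by apply: contra ne => /eqP /(lev_inj m_gt0 n_gt0 cop_mn dyck_g hk' hk) ->.
  ind_lia.
have L_k_ge0 := lev_ge0 dyck_g (ltnW hk).
have -> : (k' == k) = false by apply/eqP => e; move: bk'; rewrite e bk.
have [|[k'' hk'' [bk'' h]]] := lev_bound_vertical m n (ltnW hk'); first ind_lia.
have := top k'' (ltn_trans hk'' hk') bk''; ind_lia.
Qed.

Lemma kval_top (i : 'I_(size S).+1) : outer S i ->
  ~~ [exists i' : 'I_(size S).+1, outer S i' && (LS i < LS i')] ->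
  kval (m + n) n S i = 0%N.
Proof.
case: i => -[|j] hi //= outer_j no_higher.
have hj : (j < size S)%N by case/and4P: outer_j.
have bj : nth false S j by rewrite -outer_star.
have /mem_steps [k hk [bk Lk]] : (true, LS j) \in steps m n g.
  by rewrite -vertical_steps_star -bj -nth_steps ?mem_nth ?size_steps.
have top k' : (k' < N)%N -> b k' -> L k' <= L k.
  move=> hk' bk'.
  have /mem_steps [j' hj' [bj' Lj']] : (true, L k') \in steps (m + n) n S.
    by rewrite vertical_steps_star -bk' -nth_steps ?mem_nth ?size_steps.
  move/existsPn: no_higher => /(_ (Ordinal (hj' : (j'.+1 < (size S).+1)%N))) /=.
  rewrite outer_star // -bj' /= !levS // -bj' bj /lev_step -Lj' Lk.
  by rewrite ltrD2r -real_leNgt ?num_real.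
apply/eqP; rewrite -(eqr_nat int) natz kval_star // sum_hcross_star big_steps Lk.
rewrite (bigD1 (Ordinal hk)) //= big1 => [|[k' hk'] /=]; rewrite block_cross_top //.
  by rewrite eqxx addr0 subrr.
by rewrite -val_eqE /= => /negbTE ->.
Qed.

Lemma sum_Vset_kval :
  \sum_(i in Vset (m + n) n S) (kval (m + n) n S i)%:Z =
  pairsum (outer_cross m n) (steps m n g) +
  pairsum (fun x y => outer_cross m n y x) (steps m n g).
Proof.
rewrite -sum_outer_kval [RHS](bigID (mem (Vset (m + n) n S))) /=.
rewrite [X in _ = _ + X]big1 ?addr0 => [|i /andP[outer_i]].
  by apply: eq_bigl => i; rewrite inE; case: (outer S i).
by rewrite inE outer_i => /kval_top ->.
Qed.

Ltac unfold_meet := rewrite /star_meet /outer_cross /block_cross /star_block /=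
  !big_cons !big_nil /hmeet /hcross /ind /=.

Lemma star_meet_horizontal i j : (i < j)%N -> (j < N)%N ->
  star_meet m n (false, L i) (b j, L j) =
  outer_cross m n (b j, L j) (false, L i) + ind (hmeet m n (false, L i) (b j, L j)).
Proof.
move=> hij hj; case bj: (b j); last by unfold_meet; lia.
have /eqP := lev_before_vertical m_gt0 n_gt0 cop_mn dyck_g hij hj bj.
unfold_meet; ind_lia.
Qed.

Lemma star_meet_vertical i j : (i < j)%N -> (j < N)%N -> b i ->
  star_meet m n (true, L i) (b j, L j) =
  outer_cross m n (true, L i) (b j, L j) + outer_cross m n (b j, L j) (true, L i) +
  signed_cross m n g (L i + m%:Z + n%:Z) j.
Proof.
move=> hij hj bi; have hi := ltn_trans hij hj.
have /eqP : L j != L i + m%:Z + n%:Z.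
  by apply: lev_after_vertical => //; rewrite hij ltnW.
have /eqP : L j.+1 != L i + m%:Z + n%:Z.
  by apply: lev_after_vertical => //; rewrite ltnW.
have /eqP : L j != L i.
  apply: contraTneq hij => /(lev_inj m_gt0 n_gt0 cop_mn dyck_g hj hi) ->.
  by rewrite ltnn.
rewrite levS // /signed_cross; case: (b j); rewrite /lev_step; unfold_meet;
  move=> *; repeat case: ifP; lia.
Qed.

Lemma pairsum_star_meet :
  pairsum (star_meet m n) (steps m n g) =
  pairsum (outer_cross m n) (steps m n g) +
  pairsum (fun x y => outer_cross m n y x) (steps m n g) +
  pairsum (fun x y => ind (hmeet m n x y)) (steps m n g).
Proof.
apply/eqP; rewrite -subr_eq0 -!pairsumD -pairsumB (pairsum_nth _ _ (false, 0)).
apply/eqP; rewrite size_steps big1_seq // => i /andP[_].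
rewrite mem_index_iota => /andP[_ hi].
under eq_big_nat => j /andP[hij hj] do rewrite !nth_steps //.
case bi: (b i).
- under eq_big_nat => j /andP[hij hj] do
    rewrite star_meet_vertical //= addr0 addrAC subrr add0r.
  rewrite sum_signed_cross ?hi ?leqnn // => [|j /andP[hij hjN]]; last first.
    by apply: lev_after_vertical => //; rewrite hij hjN.
  rewrite lev_size // levS // bi /lev_step.
  by have := lev_ge0 dyck_g (ltnW hi); ind_lia.
- rewrite big1_seq // => j /andP[_]; rewrite mem_index_iota => /andP[hij hj].
  rewrite star_meet_horizontal // /outer_cross /=; lia.
Qed.

End StarOfDyck.

Local Close Scope ring_scope.

Theorem mainTheorem7 (m n : nat) (g : seq bool) :
  0 < m -> 0 < n -> coprime m n -> is_dyck m n g ->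
  ((hstat m n g)%:Z =
   (hstat (m + n) n (star g))%:Z
   - \sum_(i in Vset (m + n) n (star g)) (kval (m + n) n (star g) i)%:Z)%R.
Proof.
move=> m_gt0 n_gt0 cop_mn dyck_g.
rewrite hstat_star (pairsum_star_meet m_gt0 n_gt0 cop_mn dyck_g).
by rewrite (sum_Vset_kval m_gt0 n_gt0 cop_mn dyck_g) hstat_pairsum addrAC subrr add0r.
Qed.
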